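(* For every $n\ge0$, in $\mathbb{Z}[x,q]$ modulo the ideal generated by $q^2-1$, $$L_n(x)+q\bar L_n(x)\equiv r_n(x,q),\qquad e_n(x)+q\,o_n(x)\equiv p_n(x,q).$$
   Context: $e(n,k)$ (resp. $o(n,k)$) is the number of $k$-element subsets of $\{1,\dots,n\}$ with even (resp. odd) sum, the empty set counting as even; $e_n(x)=\sum_k e(n,k)x^k$, $o_n(x)=\sum_k o(n,k)x^k$. Losanitsch's triangle $(L(n,k))$ is defined by $L(0,k)=[k=0]$, $L(1,k)=[k\le 1]$ for $k\ge0$, $L(n,k)=0$ for $k<0$, and for $n\ge 2$: $L(n,k)=L(n-2,k)+\binom{n-2}{k-1}+L(n-2,k-2)$ (with $\binom{m}{j}=0$ for $j<0$ or $j>m$); $\bar L(n,k)=\binom nk-L(n,k)$; $L_n(x)=\sum_{k=0}^nL(n,k)x^k$, $\bar L_n(x)=\sum_{k=0}^n\bar L(n,k)x^k$. $\begin{bmatrix} n\\ k\end{bmatrix}_q$ is the Gaussian binomial coefficient, $r_n(x,q)=\sum_{k=0}^n\begin{bmatrix} n\\ k\end{bmatrix}_q x^k$ (Rogers–Szegő polynomial) and $p_n(x,q)=\prod_{j=1}^n(1+q^jx)$ ($q$-Newton polynomial). *)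

From HB Require Import structures.
From mathcomp Require Import all_boot all_order all_algebra.
Set Implicit Arguments. Unset Strict Implicit. Unset Printing Implicit Defensive.
Import Order.TTheory GRing.Theory Num.Theory.
Local Open Scope ring_scope.

(* Z[x,q] is represented as {poly {poly int}}: outer variable x, inner variable q. *)

(* e(n,k), o(n,k): k-subsets of {1,...,n} with even/odd sum.
   The element i : 'I_n represents the integer i+1. *)
Definition e_cnt (n k : nat) : nat :=
  #|[set A : {set 'I_n} | (#|A| == k) && ~~ odd (\sum_(i in A) i.+1)%N]|.
Definition o_cnt (n k : nat) : nat :=
  #|[set A : {set 'I_n} | (#|A| == k) && odd (\sum_(i in A) i.+1)%N]|.

(* Losanitsch's triangle, k >= 0 (terms with negative index are 0). *)
Fixpoint Los (n k : nat) {struct n} : nat :=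
  match n with
  | 0 => (k == 0)%N
  | 1 => (k <= 1)%N
  | m.+2 => (Los m k + (if k is k'.+1 then 'C(m, k') else 0)
             + (if k is k''.+2 then Los m k'' else 0))%N
  end.

Definition Losbar (n k : nat) : int := ('C(n, k))%:Z - (Los n k)%:Z.

Fixpoint qbinom (n k : nat) : {poly int} :=
  match n, k with
  | _, 0 => 1
  | 0, _.+1 => 0
  | m.+1, j.+1 => qbinom m j + 'X^(j.+1) * qbinom m j.+1
  end.

Definition qv : {poly {poly int}} := ('X : {poly int})%:P.

Definition e_poly (n : nat) : {poly {poly int}} :=
  \sum_(k < n.+1) (e_cnt n k)%:R * 'X^k.
Definition o_poly (n : nat) : {poly {poly int}} :=
  \sum_(k < n.+1) (o_cnt n k)%:R * 'X^k.
Definition L_poly (n : nat) : {poly {poly int}} :=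
  \sum_(k < n.+1) (Los n k)%:R * 'X^k.
Definition Lbar_poly (n : nat) : {poly {poly int}} :=
  \sum_(k < n.+1) (Losbar n k)%:~R * 'X^k.
Definition r_poly (n : nat) : {poly {poly int}} :=
  \sum_(k < n.+1) (qbinom n k)%:P * 'X^k.
Definition p_poly (n : nat) : {poly {poly int}} :=
  \prod_(1 <= j < n.+1) (1 + qv ^+ j * 'X).

Definition eqmod_q2 (A B : {poly {poly int}}) : Prop :=
  exists h : {poly {poly int}}, A - B = h * (qv ^+ 2 - 1).

(* Modulo q^2 - 1, a polynomial in q over Z is determined by its values at
   q = 1 and q = -1 (as 2 is not a zero divisor), so the first congruence can be
   checked coefficientwise at q = 1 and q = -1.  At q = 1 both sides give
   binomial coefficients; at q = -1 the Gaussian binomial satisfies the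
   two-step recurrence [n+2, k+2] = [n, k] + [n, k+2], which is also the one of
   2 L(n,k) - C(n,k) by Losanitsch's recurrence and Pascal's rule.  For the
   second congruence, expanding the product over subsets A of {1..n} gives
   p_n(x,q) = sum_A q^(sum A) x^|A|, and q^s = q^(s mod 2) modulo q^2 - 1. *)

From mathcomp Require Import all_boot all_order all_algebra.
From mathcomp Require Import ring zify.
Set Implicit Arguments. Unset Strict Implicit. Unset Printing Implicit Defensive.
Import Order.TTheory GRing.Theory Num.Theory.
Local Open Scope ring_scope.

Section CongruenceModulo.
Variables (R : comPzRingType) (m : R).

Definition cong_mod (a b : R) : Prop := exists h, a - b = h * m.

Lemma cong_mod_refl a : cong_mod a a.
Proof. by exists 0; rewrite subrr mul0r. Qed.

Lemma cong_modD a b c d : cong_mod a b -> cong_mod c d -> cong_mod (a + c) (b + d).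
Proof. by move=> [h Eh] [g Eg]; exists (h + g); rewrite mulrDl -Eh -Eg opprD addrACA. Qed.

Lemma cong_modMr c a b : cong_mod a b -> cong_mod (a * c) (b * c).
Proof. by move=> [h Eh]; exists (h * c); rewrite -mulrBl Eh mulrAC. Qed.

Lemma cong_mod_sum (I : Type) (r : seq I) (P : pred I) (F G : I -> R) :
  (forall i, P i -> cong_mod (F i) (G i)) ->
  cong_mod (\sum_(i <- r | P i) F i) (\sum_(i <- r | P i) G i).
Proof.
by move=> FG; apply: (big_ind2 cong_mod) => //; [apply: cong_mod_refl | apply: cong_modD].
Qed.

End CongruenceModulo.

Lemma cong_mod_rmorph (R S : comPzRingType) (f : {rmorphism R -> S}) (m a b : R) :
  cong_mod m a b -> cong_mod (f m) (f a) (f b).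
Proof. by move=> [h Eh]; exists (f h); rewrite -rmorphB Eh rmorphM. Qed.

Lemma cong_mod_1_expr (R : comPzRingType) (a : R) k : cong_mod (a - 1) 1 (a ^+ k).
Proof. by exists (- \sum_(i < k) a ^+ i); rewrite -opprB subrX1 mulNr mulrC. Qed.

Lemma cong_mod_expr_odd (R : comPzRingType) (a : R) s :
  cong_mod (a ^+ 2 - 1) (a ^+ odd s) (a ^+ s).
Proof.
rewrite -{2}(odd_double_half s) exprD -muln2 mulnC exprM.
rewrite -[X in cong_mod _ X _]mul1r [X in cong_mod _ _ X]mulrC.
by apply: cong_modMr; apply: cong_mod_1_expr.
Qed.

Lemma cong_mod_X2_1 (R : idomainType) (f g : {poly R}) : 2%:R != 0 :> R ->
  f.[1] = g.[1] -> f.[-1] = g.[-1] -> cong_mod ('X^2 - 1) f g.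
Proof.
move=> two_neq0 fg1 fgN1.
have /factor_theorem [h1 Eh1] : root (f - g) 1 by rewrite rootE !hornerE fg1 subrr.
have /factor_theorem [h Eh] : root h1 (-1).
  move: fgN1 => /eqP; rewrite -subr_eq0 -!hornerN -hornerD Eh1 hornerM !hornerE.
  by rewrite -opprD mulrN oppr_eq0 mulf_eq0 (negbTE two_neq0) orbF.
exists h; rewrite Eh1 Eh -mulrA polyCN opprK polyC1; congr (_ * _).
by rewrite mulrC -subr_sqr expr1n.
Qed.

Lemma qbinom0 n : qbinom n 0 = 1. Proof. by case: n. Qed.

Lemma qbinomSS m j : qbinom m.+1 j.+1 = qbinom m j + 'X^(j.+1) * qbinom m j.+1.
Proof. by []. Qed.

Lemma qbinom_at1 n k : (qbinom n k).[1] = 'C(n, k)%:R.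
Proof.
elim: n k => [|n IHn] [|k]; rewrite ?qbinom0 ?hornerC //.
by rewrite qbinomSS hornerD hornerM hornerXn expr1n mul1r !IHn binS natrD addrC.
Qed.

Lemma qbinomSS_atN1 m k :
  (qbinom m.+2 k.+2).[-1] = (qbinom m k).[-1] + (qbinom m k.+2).[-1].
Proof.
rewrite !qbinomSS !hornerE mulrDr mulrA -expr2 sqrr_sign mul1r [(-1) ^+ k.+2]exprS.
ring.
Qed.

Lemma qbinomS1_atN1 m : (qbinom m.+2 1).[-1] = (qbinom m 1).[-1].
Proof. by rewrite !qbinomSS !(hornerD, hornerM, hornerXn) !qbinom0 hornerC; ring. Qed.

Lemma Los0 n : Los n 0 = 1%N.
Proof. by elim/ltn_ind: n => -[|[|m]] // IH; rewrite /= IH ?addn0. Qed.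

Lemma qbinom_atN1 n k : (qbinom n k).[-1] = 2 * (Los n k)%:R - 'C(n, k)%:R.
Proof.
elim/ltn_ind: n k => -[|[|m]] IH [|[|k]]; try by rewrite /= !hornerE.
- by rewrite qbinom0 hornerC Los0.
- rewrite qbinomS1_atN1 IH // /= bin0 !bin1 !natz; lia.
- rewrite qbinomSS_atN1 !IH // /= !binS !natz; lia.
Qed.

Lemma Los_Losbar_cong_qbinom n k :
  cong_mod ('X^2 - 1) ((Los n k)%:R + 'X * (Losbar n k)%:~R) (qbinom n k).
Proof.
apply: cong_mod_X2_1 => //; rewrite !(hornerE, hornerMn, horner_int) ?qbinom_at1 ?qbinom_atN1.
all: by rewrite /Losbar intz !natz; lia.
Qed.

Lemma eqmod_q2E A B : eqmod_q2 A B = cong_mod ('X^2 - 1)%:P A B.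
Proof. by rewrite /eqmod_q2 /qv -polyC1 -rmorphXn -rmorphB. Qed.

Lemma L_qLbar_eqmod_r n : eqmod_q2 (L_poly n + qv * Lbar_poly n) (r_poly n).
Proof.
have -> : L_poly n + qv * Lbar_poly n =
          \sum_(k < n.+1) ((Los n k)%:R + 'X * (Losbar n k)%:~R)%:P * 'X^k.
  rewrite /L_poly /Lbar_poly mulr_sumr -big_split; apply: eq_bigr => k _ /=.
  by rewrite polyCD polyCM polyC_natr rmorph_int mulrDl mulrA.
rewrite eqmod_q2E; apply: cong_mod_sum => k _.
exact/cong_modMr/cong_mod_rmorph/Los_Losbar_cong_qbinom.
Qed.

Lemma sum_card_subsets_exp (T : finType) (R : pzSemiRingType) (P : pred {set T}) (x : R) N :
  (#|T| < N)%N ->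
  \sum_(k < N) #|[set A : {set T} | (#|A| == k) && P A]|%:R * x ^+ k =
  \sum_(A | P A) x ^+ #|A|.
Proof.
case: N => [//|N] ltTN.
rewrite (partition_big (fun A : {set T} => inord #|A| : 'I_N.+1) xpredT) //=.
apply: eq_bigr => k _; rewrite mulr_natl -sumr_const.
have inordE (A : {set T}) : (inord #|A| == k :> 'I_N.+1) = (#|A| == k).
  by rewrite -val_eqE /= inordK // ltnS (leq_trans (max_card A)) // -ltnS.
apply: eq_big => A; rewrite inE; first by rewrite inordE andbC.
by case/andP => /eqP->.
Qed.

Lemma prod_1D_subsets (I : finType) (R : comPzSemiRingType) (c : I -> R) (x : R) :
  \prod_i (1 + c i * x) = \sum_(A : {set I}) (\prod_(i in A) c i) * x ^+ #|A|.
Proof.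
rewrite (eq_bigr (fun i => c i * x + 1)) => [|i _]; last exact: addrC.
rewrite bigA_distr; apply: eq_bigr => A _.
by rewrite -big_mkcond big_split prodr_const.
Qed.

Lemma e_qo_eqmod_p n : eqmod_q2 (e_poly n + qv * o_poly n) (p_poly n).
Proof.
pose S (A : {set 'I_n}) := (\sum_(i in A) i.+1)%N.
have -> : e_poly n + qv * o_poly n = \sum_(A : {set 'I_n}) qv ^+ odd (S A) * 'X^#|A|.
  rewrite /e_poly /o_poly !sum_card_subsets_exp ?card_ord // mulr_sumr.
  rewrite [RHS](bigID (fun A => odd (S A))) /= addrC.
  by congr (_ + _); apply: eq_bigr => A; [move=> /negbTE-> | move=> ->]; rewrite ?mul1r.
have -> : p_poly n = \sum_(A : {set 'I_n}) qv ^+ S A * 'X^#|A|.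
  rewrite /p_poly big_add1 big_mkord prod_1D_subsets.
  by apply: eq_bigr => A _; rewrite prodrXr.
apply: cong_mod_sum => A _; apply: cong_modMr; exact: cong_mod_expr_odd.
Qed.

Theorem corollary4p2 (n : nat) :
  eqmod_q2 (L_poly n + qv * Lbar_poly n) (r_poly n) /\
  eqmod_q2 (e_poly n + qv * o_poly n) (p_poly n).
Proof. by split; [apply: L_qLbar_eqmod_r | apply: e_qo_eqmod_p]. Qed.
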